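(* Let $A\subseteq\mathbb{N}$, let $d,r\in\mathbb{N}$, let $B=\{a/d : a\in A\}\cap\mathbb{N}$ and let $C=\{a\in A : a\equiv 0 \pmod d\}$. If $A$ is $rd$-accessible, then (i) $B$ is $r$-accessible, and (ii) $C$ is $r$-accessible.
   Context: An $r$-coloring of a set $A$ is a function $\chi:A\to\{1,\dots,r\}$. For $D\subseteq\mathbb{N}=\{1,2,3,\dots\}$, a $k$-term $D$-diffsequence is a sequence of integers $x_1,\dots,x_k$ with $x_{i+1}-x_i\in D$ for all $1\le i\le k-1$. A set $D\subseteq\mathbb{N}$ is $r$-accessible if for every $r$-coloring of $\mathbb{N}$ and every $k\ge1$ there is a monochromatic $k$-term $D$-diffsequence in $\mathbb{N}$. *)

From mathcomp Require Import all_boot.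
Set Implicit Arguments. Unset Strict Implicit. Unset Printing Implicit Defensive.

(* Subsets of N = {1,2,3,...} are represented as predicates on nat;
   positivity is imposed separately where needed. *)

Definition diffseq (D : nat -> Prop) (x : seq nat) : Prop :=
  forall i, i.+1 < size x ->
    exists2 delta, D delta & nth 0 x i.+1 = nth 0 x i + delta.

(* An r-coloring of N is chi : nat -> 'I_r (the value at 0 is irrelevant,
   since the sequences below live in N = {1,2,...}). *)
Definition accessible (r : nat) (D : nat -> Prop) : Prop :=
  forall (chi : nat -> 'I_r) (k : nat), 1 <= k ->
    exists x : seq nat,
      [/\ size x = k,
          (forall i, i < k -> 0 < nth 0 x i),
          diffseq D x &
          (forall i, i < k -> chi (nth 0 x i) = chi (nth 0 x 0))].

Definition divset (A : nat -> Prop) (d : nat) : nat -> Prop :=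
  fun b => 0 < b /\ A (b * d).

Definition multset (A : nat -> Prop) (d : nat) : nat -> Prop :=
  fun a => A a /\ d %| a.

From mathcomp Require Import all_boot.

Set Implicit Arguments.
Unset Strict Implicit.

(* Color n by the pair (chi n, n mod d), which uses r * d colors.  A monochromatic
   A-diffsequence for this coloring has all its terms congruent mod d, so its steps
   lie in C = multset A d; this gives (ii).  Dividing such a sequence by d (and
   adding 1 to stay in N) turns it into a B-diffsequence, which gives (i). *)

Definition mono_diffseq (T : Type) (D : nat -> Prop) (chi : nat -> T) (k : nat)
    (x : seq nat) : Prop :=
  [/\ size x = k,
      (forall i, i < k -> 0 < nth 0 x i),
      diffseq D x &
      (forall i, i < k -> chi (nth 0 x i) = chi (nth 0 x 0))].

Lemma accessible_finType (T : finType) (n : nat) (D : nat -> Prop) :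
  #|T| = n -> accessible n D ->
  forall (chi : nat -> T) (k : nat), 1 <= k -> exists x, mono_diffseq D chi k x.
Proof.
move=> cardT accD chi k k_gt0.
have [x [sx pos dx mono]] := accD (fun m => cast_ord cardT (enum_rank (chi m))) k k_gt0.
exists x; split=> // i ltik.
exact/enum_rank_inj/(cast_ord_inj (mono i ltik)).
Qed.

Lemma diffseq_multset (D : nat -> Prop) (d : nat) (x : seq nat) :
  diffseq D x -> (forall i, i < size x -> nth 0 x i = nth 0 x 0 %[mod d]) ->
  diffseq (multset D d) x.
Proof.
move=> dx congr i lti; have [delta Ddelta step] := dx i lti.
exists delta => //; split=> //.
have := congr i.+1 lti; rewrite -(congr i (ltnW lti)) step.
by rewrite -[X in _ = X %% d]addn0 => /eqP; rewrite eqn_modDl mod0n.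
Qed.

Lemma accessible_multset (A : nat -> Prop) (d r : nat) :
  0 < d -> accessible (r * d) A -> accessible r (multset A d).
Proof.
move=> d_gt0 accA chi k k_gt0.
pose residue m : 'I_d := Ordinal (ltn_pmod m d_gt0).
have cardT : #|{: 'I_r * 'I_d}| = r * d by rewrite card_prod !card_ord.
have [x [sx pos dx mono]] :=
  accessible_finType cardT accA (fun m => (chi m, residue m)) k_gt0.
exists x; split=> // [|i ltik]; last by have [] := mono i ltik.
apply: diffseq_multset dx _ => i; rewrite sx => ltik.
by have [_ /(congr1 val)] := (pair_equal_spec _ _ _ _).1 (mono i ltik).
Qed.

Lemma diffseq_divset (A : nat -> Prop) (d : nat) (x : seq nat) :
  (forall a, A a -> 0 < a) -> 0 < d ->
  diffseq (multset A d) x -> diffseq (divset A d) [seq (m %/ d).+1 | m <- x].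
Proof.
move=> Apos d_gt0 dx i; rewrite size_map => lti.
have [delta [Adelta /dvdnP[q def_delta]] step] := dx i lti.
exists q.
  split; last by rewrite -def_delta.
  by have := Apos _ Adelta; rewrite def_delta; case: q {def_delta}.
by rewrite !(nth_map 0) ?(ltnW lti) // step def_delta addnC divnMDl // addSn addnC.
Qed.

Lemma accessible_divset (A : nat -> Prop) (d r : nat) :
  (forall a, A a -> 0 < a) -> 0 < d ->
  accessible r (multset A d) -> accessible r (divset A d).
Proof.
move=> Apos d_gt0 accC chi k k_gt0.
have [x [sx pos dx mono]] := accC (fun m => chi (m %/ d).+1) k k_gt0.
exists [seq (m %/ d).+1 | m <- x]; split.
- by rewrite size_map.
- by move=> i ltik; rewrite (nth_map 0) ?sx.
- exact: diffseq_divset.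
- by move=> i ltik; rewrite !(nth_map 0) ?sx //; apply: mono.
Qed.

Theorem mainTheorem3 (A : nat -> Prop) (d r : nat) :
  (forall a, A a -> 0 < a) -> 0 < d -> 0 < r ->
  accessible (r * d) A ->
  accessible r (divset A d) /\ accessible r (multset A d).
Proof.
move=> Apos d_gt0 _ accA.
have accC := accessible_multset d_gt0 accA.
by split; first exact: accessible_divset.
Qed.
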